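(* Let $V$ be an $n$-dimensional complex vector space with basis $e_1,\ldots,e_n$ and dual basis $e_1^*,\ldots,e_n^*$. Let $a_{ij}=e_i\otimes e_j-e_j\otimes e_i\in\Lambda_2(V)$ and $b_{ij}=e_i^*\otimes e_j^*+e_j^*\otimes e_i^*\in S_2(V^* )$, and let $A=(a_{ij})_{1\le i,j\le n}$, $B=(b_{ij})_{1\le i,j\le n}\in\operatorname{Mat}_{n,n}(\Lambda(\Lambda_2(V)\oplus S_2(V^* )))$. Then $\operatorname{tr}((AB)^k)=0$ for every $k>0$.
   Context: $\Lambda(\Lambda_2(V)\oplus S_2(V^* ))$ is the exterior algebra on $\Lambda_2(V)\oplus S_2(V^* )$; the $a_{ij}$ and $b_{ij}$ are elements of degree one in it (so they pairwise anticommute), with $a_{ji}=-a_{ij}$ and $b_{ji}=b_{ij}$. Matrix products are taken with entries multiplied in the order written. *)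

From HB Require Import structures.
From mathcomp Require Import all_boot all_order all_algebra.
From mathcomp Require Import complex.
Set Implicit Arguments. Unset Strict Implicit. Unset Printing Implicit Defensive.
Import Order.TTheory GRing.Theory Num.Theory.
Local Open Scope ring_scope.

(* Exterior algebra Λ(W) over a commutative ring F, where W is free with
   basis indexed by a finite type X.  An element is a finite function
   {set X} -> F giving its coordinates on the basis e_S = e_{x1}∧...∧e_{xk}
   (x1 < ... < xk in the order of enum_rank). *)
Section Exterior.
Variables (F : comNzRingType) (X : finType).

Definition extalg := {ffun {set X} -> F}.

(* number of pairs (a,b) in A x B with b < a: sign of e_A ∧ e_B = ± e_{A∪B} *)
Definition ext_inv (A B : {set X}) : nat :=
  #|[set p : X * X | [&& p.1 \in A, p.2 \in B & (enum_rank p.2 < enum_rank p.1)%N]]|.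

Definition ext_mul (u v : extalg) : extalg :=
  [ffun S : {set X} => \sum_(A : {set X}) \sum_(B : {set X})
     if [disjoint A & B] && (A :|: B == S)
     then (-1) ^+ ext_inv A B * u A * v B else 0].

Definition ext_one : extalg := [ffun S : {set X} => (S == set0)%:R].

Definition ext_gen (x : X) : extalg := [ffun S : {set X} => (S == [set x])%:R].

Definition emx (n : nat) := 'I_n -> 'I_n -> extalg.
Definition emx_mul n (M N : emx n) : emx n :=
  fun i j => \sum_(l < n) ext_mul (M i l) (N l j).
Definition emx_one n : emx n := fun i j => if i == j then ext_one else 0.
Definition emx_pow n (M : emx n) (k : nat) : emx n :=
  iter k (fun Q => emx_mul Q M) (@emx_one n).
Definition emx_tr n (M : emx n) : extalg := \sum_(i < n) M i i.
End Exterior.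

(* Generators: inl (i,j) is e_i ⊗ e_j in V ⊗ V, inr (i,j) is e_i^* ⊗ e_j^*
   in V^* ⊗ V^*.  Λ_2(V) ⊕ S_2(V^* ) is a subspace of V⊗V ⊕ V^*⊗V^*, so
   Λ(Λ_2(V) ⊕ S_2(V^* )) is the subalgebra of Λ(V⊗V ⊕ V^*⊗V^* ) it generates. *)
Definition genT (n : nat) : finType := (('I_n * 'I_n) + ('I_n * 'I_n))%type.

Definition amx (F : comNzRingType) (n : nat) : emx F (genT n) n :=
  fun i j => ext_gen F (inl (i, j) : genT n) - ext_gen F (inl (j, i) : genT n).
Definition bmx (F : comNzRingType) (n : nat) : emx F (genT n) n :=
  fun i j => ext_gen F (inr (i, j) : genT n) + ext_gen F (inr (j, i) : genT n).

From HB Require Import structures.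
From mathcomp Require Import all_boot all_order all_algebra.
From mathcomp Require Import complex.
From mathcomp Require Import ring.
From Stdlib Require Import FunctionalExtensionality.
Set Implicit Arguments. Unset Strict Implicit. Unset Printing Implicit Defensive.
Import Order.TTheory GRing.Theory Num.Theory.
Local Open Scope ring_scope.

(* Entries of A and B have degree 1 in the exterior algebra, so the entries of
   P = AB have degree 2 and commute with everything.  Hence transposition
   reverses products of even-degree matrices without sign, (P^k)^T = (P^T)^k,
   while for the degree-1 matrices A, B it costs a sign: P^T = -(B^T A^T) = BA.
   Therefore tr P^k = tr (P^k)^T = tr (BA)^k = tr (B P^(k-1) A), and cycling
   the degree-1 factor A to the front costs one more sign: tr P^k = - tr P^k.
   Over C this forces tr P^k = 0. *)

Section ExteriorAlgebra.
Variables (F : comNzRingType) (X : finType).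
Local Notation extalg := (extalg F X).
Local Notation ext_mul := (@ext_mul F X).
Local Notation rank := (@enum_rank X).

Lemma ext_invE (A B : {set X}) :
  ext_inv A B = (\sum_(a in A) \sum_(b in B) (rank b < rank a : nat))%N.
Proof.
rewrite /ext_inv -sum1_card [RHS]pair_big_dep /= big_mkcond [RHS]big_mkcond /=.
by apply: eq_bigr => p _; rewrite inE; case: (p.1 \in A); case: (p.2 \in B); case: ltnP.
Qed.

Lemma ext_inv0l (B : {set X}) : ext_inv set0 B = 0%N.
Proof. by rewrite ext_invE big_set0. Qed.

Lemma ext_inv0r (A : {set X}) : ext_inv A set0 = 0%N.
Proof. by rewrite ext_invE big1 // => a _; rewrite big_set0. Qed.

Lemma ext_inv_sym (A B : {set X}) : [disjoint A & B] ->
  (ext_inv A B + ext_inv B A = #|A| * #|B|)%N.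
Proof.
move=> dAB; rewrite !ext_invE [X in (_ + X)%N]exchange_big -big_split /=.
rewrite -sum_nat_const; apply: eq_bigr => a aA.
rewrite -big_split /= (eq_bigr (fun=> 1%N)) ?sum1_card // => b bB.
have : rank a != rank b.
  by rewrite (inj_eq enum_rank_inj); apply: contraTneq bB => <-; rewrite (disjointFr dAB).
by rewrite -val_eqE /=; case: ltngtP.
Qed.

Lemma ext_invUl (A B C : {set X}) : [disjoint A & B] ->
  ext_inv (A :|: B) C = (ext_inv A C + ext_inv B C)%N.
Proof. by move=> dAB; rewrite !ext_invE -bigU //; apply: eq_bigl => a; rewrite !inE. Qed.

Lemma ext_invUr (A B C : {set X}) : [disjoint B & C] ->
  ext_inv A (B :|: C) = (ext_inv A B + ext_inv A C)%N.
Proof.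
move=> dBC; rewrite !ext_invE -big_split; apply: eq_bigr => a _.
by rewrite -bigU //; apply: eq_bigl => b; rewrite !inE.
Qed.

Lemma disjoint_setUl (A B C : {set X}) :
  [disjoint A :|: B & C] = [disjoint A & C] && [disjoint B & C].
Proof. by rewrite !disjoints_subset subUset. Qed.

Lemma disjoint_setUr (A B C : {set X}) :
  [disjoint A & B :|: C] = [disjoint A & B] && [disjoint A & C].
Proof. by rewrite ![[disjoint A & _]]disjoint_sym disjoint_setUl. Qed.

Lemma disjoint_set0l (B : {set X}) : [disjoint set0 & B].
Proof. by rewrite disjoints_subset sub0set. Qed.

Lemma disjoint_set0r (A : {set X}) : [disjoint A & set0].
Proof. by rewrite disjoint_sym disjoint_set0l. Qed.

Lemma ext_mulE (u v : extalg) (S : {set X}) : ext_mul u v S =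
  \sum_(A : {set X}) \sum_(B : {set X})
    if [disjoint A & B] && (A :|: B == S) then (-1) ^+ ext_inv A B * u A * v B else 0.
Proof. by rewrite ffunE. Qed.

Lemma ext_mulDl (u v w : extalg) : ext_mul (u + v) w = ext_mul u w + ext_mul v w.
Proof.
apply/ffunP => S; rewrite !ffunE -big_split; apply: eq_bigr => A _.
rewrite -big_split; apply: eq_bigr => B _ /=; rewrite ffunE.
by case: ifP => _; [ring | rewrite addr0].
Qed.

Lemma ext_mulDr (u v w : extalg) : ext_mul u (v + w) = ext_mul u v + ext_mul u w.
Proof.
apply/ffunP => S; rewrite !ffunE -big_split; apply: eq_bigr => A _.
rewrite -big_split; apply: eq_bigr => B _ /=; rewrite ffunE.
by case: ifP => _; [ring | rewrite addr0].
Qed.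

Lemma ext_mul0l (w : extalg) : ext_mul 0 w = 0.
Proof.
apply/ffunP => S; rewrite !ffunE; apply: big1 => A _; apply: big1 => B _.
by rewrite ffunE mulr0 mul0r if_same.
Qed.

Lemma ext_mul0r (u : extalg) : ext_mul u 0 = 0.
Proof.
apply/ffunP => S; rewrite !ffunE; apply: big1 => A _; apply: big1 => B _.
by rewrite ffunE mulr0 if_same.
Qed.

Lemma ext_mulNr (u w : extalg) : ext_mul u (- w) = - ext_mul u w.
Proof.
apply/ffunP => S; rewrite !ffunE -sumrN; apply: eq_bigr => A _.
rewrite -sumrN; apply: eq_bigr => B _ /=; rewrite ffunE.
by case: ifP => _; [ring | rewrite oppr0].
Qed.

Lemma ext_mul_suml (I : Type) (r : seq I) (P : pred I) (f : I -> extalg) w :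
  ext_mul (\sum_(i <- r | P i) f i) w = \sum_(i <- r | P i) ext_mul (f i) w.
Proof. exact: (big_morph (ext_mul^~ w) (fun u v => ext_mulDl u v w) (ext_mul0l w)). Qed.

Lemma ext_mul_sumr (I : Type) (r : seq I) (P : pred I) (f : I -> extalg) u :
  ext_mul u (\sum_(i <- r | P i) f i) = \sum_(i <- r | P i) ext_mul u (f i).
Proof. exact: (big_morph (ext_mul u) (ext_mulDr u) (ext_mul0r u)). Qed.

Lemma ext_mul1l (u : extalg) : ext_mul (ext_one F X) u = u.
Proof.
apply/ffunP => S; rewrite ext_mulE (bigD1 set0) //=.
rewrite [X in _ + X]big1 ?addr0 => [|A nA]; last first.
  by apply: big1 => B _; rewrite ffunE (negbTE nA) mulr0 mul0r if_same.
rewrite (bigD1 S) //= [X in _ + X]big1 ?addr0 => [|B nB].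
  by rewrite ffunE eqxx disjoint_set0l set0U eqxx ext_inv0l mulr1n !mul1r.
by rewrite set0U (negbTE nB) andbF.
Qed.

Lemma ext_mul1r (u : extalg) : ext_mul u (ext_one F X) = u.
Proof.
apply/ffunP => S; rewrite ext_mulE (bigD1 S) //=.
rewrite [X in _ + X]big1 ?addr0 => [|A nA]; last first.
  apply: big1 => B _; have [->|nB] := eqVneq B set0.
    by rewrite setU0 (negbTE nA) andbF.
  by rewrite ffunE (negbTE nB) mulr0 if_same.
rewrite (bigD1 set0) //= [X in _ + X]big1 ?addr0 => [|B nB].
  by rewrite ffunE eqxx disjoint_set0r setU0 eqxx ext_inv0r mulr1n mul1r mulr1.
by rewrite ffunE (negbTE nB) mulr0 if_same.
Qed.

Definition ext_mul3 (u v w : extalg) : extalg := [ffun S : {set X} =>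
  \sum_(A : {set X}) \sum_(B : {set X}) \sum_(D : {set X})
    if [&& [disjoint A & B], [disjoint A & D], [disjoint B & D] & A :|: B :|: D == S]
    then (-1) ^+ (ext_inv A B + ext_inv A D + ext_inv B D) * u A * v B * w D else 0].

Lemma ext_mul_mull (u v w : extalg) : ext_mul (ext_mul u v) w = ext_mul3 u v w.
Proof.
apply/ffunP => S; rewrite ext_mulE ffunE.
transitivity (\sum_(C : {set X}) \sum_(D : {set X}) \sum_(A : {set X}) \sum_(B : {set X})
  if ([disjoint C & D] && (C :|: D == S)) && ([disjoint A & B] && (A :|: B == C))
  then (-1) ^+ ext_inv C D * (-1) ^+ ext_inv A B * u A * v B * w D else 0).
  apply: eq_bigr => C _; apply: eq_bigr => D _; rewrite ext_mulE.
  case: ifP => /= [_|_]; last by rewrite big1 // => A _; rewrite big1.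
  rewrite mulr_sumr mulr_suml; apply: eq_bigr => A _.
  rewrite mulr_sumr mulr_suml; apply: eq_bigr => B _.
  by case: ifP => _; [ring | rewrite mulr0 mul0r].
rewrite exchange_big; under eq_bigr => D _ do rewrite exchange_big.
under eq_bigr => D _ do under eq_bigr => A _ do rewrite exchange_big.
rewrite exchange_big; under eq_bigr => A _ do rewrite exchange_big /=.
apply: eq_bigr => A _; apply: eq_bigr => B _; apply: eq_bigr => D _.
rewrite (bigD1 (A :|: B)) //= [X in _ + X]big1 ?addr0 => [|C nC]; last first.
  by rewrite [A :|: B == C]eq_sym (negbTE nC) !andbF.
rewrite eqxx andbT disjoint_setUl.
case dAB : [disjoint A & B]; rewrite ?andbF // andbT -!andbA ext_invUl //.
by case: ifP => _ //; rewrite !exprD; ring.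
Qed.

Lemma ext_mul_mulr (u v w : extalg) : ext_mul u (ext_mul v w) = ext_mul3 u v w.
Proof.
apply/ffunP => S; rewrite ext_mulE ffunE.
transitivity (\sum_(A : {set X}) \sum_(C : {set X}) \sum_(B : {set X}) \sum_(D : {set X})
  if ([disjoint A & C] && (A :|: C == S)) && ([disjoint B & D] && (B :|: D == C))
  then (-1) ^+ ext_inv A C * (-1) ^+ ext_inv B D * u A * v B * w D else 0).
  apply: eq_bigr => A _; apply: eq_bigr => C _; rewrite ext_mulE.
  case: ifP => /= [_|_]; last by rewrite big1 // => B _; rewrite big1.
  rewrite mulr_sumr; apply: eq_bigr => B _; rewrite mulr_sumr; apply: eq_bigr => D _.
  by case: ifP => _; [ring | rewrite mulr0].
apply: eq_bigr => A _; rewrite exchange_big; under eq_bigr => B _ do rewrite exchange_big.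
apply: eq_bigr => B _; apply: eq_bigr => D _.
rewrite (bigD1 (B :|: D)) //= [X in _ + X]big1 ?addr0 => [|C nC]; last first.
  by rewrite [B :|: D == C]eq_sym (negbTE nC) !andbF.
rewrite eqxx andbT disjoint_setUr setUA.
case dBD : [disjoint B & D]; rewrite ?andbF //= andbT -!andbA ext_invUr //.
by case: ifP => _ //; rewrite !exprD; ring.
Qed.

Lemma ext_mulA (u v w : extalg) : ext_mul (ext_mul u v) w = ext_mul u (ext_mul v w).
Proof. by rewrite ext_mul_mull ext_mul_mulr. Qed.

Definition ext_homog (d : nat) (u : extalg) := forall S : {set X}, #|S| != d -> u S = 0.

Lemma ext_homog0 d : ext_homog d 0.
Proof. by move=> S _; rewrite ffunE. Qed.

Lemma ext_homogD d u v : ext_homog d u -> ext_homog d v -> ext_homog d (u + v).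
Proof. by move=> hu hv S hS; rewrite ffunE hu // hv // addr0. Qed.

Lemma ext_homogN d u : ext_homog d u -> ext_homog d (- u).
Proof. by move=> hu S hS; rewrite ffunE hu // oppr0. Qed.

Lemma ext_homog_sum d (I : Type) (r : seq I) (P : pred I) (f : I -> extalg) :
  (forall i, P i -> ext_homog d (f i)) -> ext_homog d (\sum_(i <- r | P i) f i).
Proof.
move=> hf; elim/big_rec: _ => [|i x Pi hx]; first exact: ext_homog0.
by apply: ext_homogD => //; apply: hf.
Qed.

Lemma ext_homog1 : ext_homog 0 (ext_one F X).
Proof. by move=> S; rewrite cards_eq0 ffunE => /negbTE ->. Qed.

Lemma ext_homog_gen (x : X) : ext_homog 1 (ext_gen F x).
Proof.
move=> S; rewrite ffunE; have [->|_ _] := eqVneq S [set x]; last by rewrite mulr0n.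
by rewrite cards1 eqxx.
Qed.

Lemma ext_homog_mul p q u v :
  ext_homog p u -> ext_homog q v -> ext_homog (p + q) (ext_mul u v).
Proof.
move=> hu hv S hS; rewrite ext_mulE; apply: big1 => A _; apply: big1 => B _.
case: ifP => // /andP[dAB /eqP eS].
have [hA|nA] := eqVneq #|A| p; last by rewrite hu // mulr0 mul0r.
have [hB|nB] := eqVneq #|B| q; last by rewrite hv // mulr0.
by move: hS; rewrite -eS cardsU (disjoint_setI0 dAB) cards0 subn0 hA hB eqxx.
Qed.

Lemma ext_mulC p q u v : ext_homog p u -> ext_homog q v ->
  ext_mul u v = ext_mul v u *~ (-1) ^+ (p * q).
Proof.
move=> hu hv; apply/ffunP => S; rewrite ffunMzE -mulrzl intr_sign !ffunE.
rewrite [X in _ * X]exchange_big mulr_sumr; apply: eq_bigr => A _; rewrite mulr_sumr.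
apply: eq_bigr => B _; rewrite disjoint_sym setUC.
case: ifP => [/andP[dBA _]|_]; last by rewrite mulr0.
have [hA|nA] := eqVneq #|A| p; last by rewrite hu // !(mulr0, mul0r).
have [hB|nB] := eqVneq #|B| q; last by rewrite hv // !(mulr0, mul0r).
rewrite -hA -hB mulnC -(ext_inv_sym dBA) exprD.
by rewrite -[LHS](signrMK (ext_inv B A)); ring.
Qed.

End ExteriorAlgebra.

Section ExteriorMatrices.
Variables (F : comNzRingType) (X : finType) (n : nat).
Local Notation emx := (emx F X n).
Local Notation emx_mul := (@emx_mul F X n).
Local Notation emx_one := (@emx_one F X n).

Definition emx_homog (d : nat) (M : emx) := forall i j, ext_homog d (M i j).

Definition emx_trmx (M : emx) : emx := fun i j => M j i.

Lemma emxP (M N : emx) : (forall i j, M i j = N i j) -> M = N.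
Proof. by move=> eMN; do 2![apply: functional_extensionality => ?]; apply: eMN. Qed.

Lemma emx_mulA (A B C : emx) : emx_mul (emx_mul A B) C = emx_mul A (emx_mul B C).
Proof.
apply: emxP => i j; rewrite /emx_mul; under eq_bigr => l _ do rewrite ext_mul_suml.
rewrite exchange_big /=; apply: eq_bigr => m _; rewrite ext_mul_sumr.
by apply: eq_bigr => l _; rewrite ext_mulA.
Qed.

Lemma emx_mul1l (A : emx) : emx_mul emx_one A = A.
Proof.
apply: emxP => i j; rewrite /emx_mul /emx_one (bigD1 i) //= eqxx ext_mul1l.
rewrite big1 ?addr0 //.
by move=> l nl; rewrite eq_sym (negbTE nl) ext_mul0l.
Qed.

Lemma emx_mul1r (A : emx) : emx_mul A emx_one = A.
Proof.
apply: emxP => i j; rewrite /emx_mul /emx_one (bigD1 j) //= eqxx ext_mul1r.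
rewrite big1 ?addr0 //.
by move=> l nl; rewrite (negbTE nl) ext_mul0r.
Qed.

Lemma emx_powSl (P : emx) k : emx_pow P k.+1 = emx_mul P (emx_pow P k).
Proof.
elim: k => [|k IHk]; first by rewrite /= emx_mul1l emx_mul1r.
by rewrite -[LHS]/(emx_mul (emx_pow P k.+1) P) {1}IHk emx_mulA.
Qed.

Lemma emx_pow_mulC (A B : emx) k :
  emx_pow (emx_mul B A) k.+1 = emx_mul (emx_mul B (emx_pow (emx_mul A B) k)) A.
Proof.
elim: k => [|k IHk]; first by rewrite /= !emx_mul1l emx_mul1r.
rewrite -[LHS]/(emx_mul (emx_pow (emx_mul B A) k.+1) (emx_mul B A)) IHk.
rewrite -[emx_pow (emx_mul A B) k.+1]/(emx_mul (emx_pow (emx_mul A B) k) (emx_mul A B)).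
by rewrite !emx_mulA.
Qed.

Lemma emx_homog_mul p q (A B : emx) :
  emx_homog p A -> emx_homog q B -> emx_homog (p + q) (emx_mul A B).
Proof. by move=> hA hB i j; apply: ext_homog_sum => l _; apply: ext_homog_mul. Qed.

Lemma emx_homog_pow d (P : emx) k : emx_homog d P -> emx_homog (d * k) (emx_pow P k).
Proof.
move=> hP; elim: k => [|k IHk] i j.
  by rewrite muln0 /= /emx_one; case: eqP => _; [exact: ext_homog1 | exact: ext_homog0].
by rewrite mulnS addnC; apply: emx_homog_mul.
Qed.

Lemma emx_trmx_mul p q (A B : emx) : emx_homog p A -> emx_homog q B ->
  forall i j, emx_trmx (emx_mul A B) i j
              = emx_mul (emx_trmx B) (emx_trmx A) i j *~ (-1) ^+ (p * q).
Proof.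
move=> hA hB i j; rewrite /emx_trmx /emx_mul mulrz_suml.
by apply: eq_bigr => l _; apply: ext_mulC.
Qed.

Lemma emx_tr_mulC p q (A B : emx) : emx_homog p A -> emx_homog q B ->
  emx_tr (emx_mul A B) = emx_tr (emx_mul B A) *~ (-1) ^+ (p * q).
Proof.
move=> hA hB; rewrite /emx_tr /emx_mul [X in X *~ _]exchange_big mulrz_suml.
apply: eq_bigr => i _; rewrite mulrz_suml; apply: eq_bigr => l _.
exact: ext_mulC.
Qed.

Lemma emx_trmx_pow d (P : emx) k : ~~ odd d -> emx_homog d P ->
  emx_trmx (emx_pow P k) = emx_pow (emx_trmx P) k.
Proof.
move=> even_d hP; elim: k => [|k IHk].
  by apply: emxP => i j; rewrite /emx_trmx /= /emx_one eq_sym.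
apply: emxP => i j.
rewrite [emx_pow P k.+1]/= (emx_trmx_mul (emx_homog_pow (k := k) hP) hP).
by rewrite -signr_odd !oddM (negbTE even_d) andbF mulr1z IHk -emx_powSl.
Qed.

Lemma emx_tr_pow_skew_symN (A B : emx) k :
  emx_homog 1 A -> emx_homog 1 B ->
  (forall i j, A j i = - A i j) -> (forall i j, B j i = B i j) ->
  emx_tr (emx_pow (emx_mul A B) k.+1) = - emx_tr (emx_pow (emx_mul A B) k.+1).
Proof.
move=> hA hB skewA symB; set P := emx_mul A B.
have hP : emx_homog 2 P := emx_homog_mul hA hB.
have trmxP : emx_trmx P = emx_mul B A.
  apply: emxP => i j; rewrite (emx_trmx_mul hA hB) mulrN1z /emx_mul -sumrN.
  by apply: eq_bigr => l _; rewrite /emx_trmx skewA symB ext_mulNr opprK.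
have hBPk := emx_homog_mul hB (emx_homog_pow (k := k) hP).
(* the trace of a matrix is, by conversion, that of its transpose *)
rewrite -[X in X = _]/(emx_tr (emx_trmx (emx_pow P k.+1))) (emx_trmx_pow _ _ hP) //.
rewrite trmxP emx_pow_mulC (emx_tr_mulC hBPk hA) -emx_mulA -emx_powSl.
by rewrite -signr_odd muln1 oddD oddM mulrN1z.
Qed.

End ExteriorMatrices.

Theorem proposition5p4 (R : rcfType) (n k : nat) :
  (0 < k)%N ->
  emx_tr (emx_pow (emx_mul (@amx R[i] n) (@bmx R[i] n)) k) = 0.
Proof.
case: k => // k _; set A := @amx R[i] n; set B := @bmx R[i] n.
have hA : emx_homog 1 A.
  by move=> a b; apply: ext_homogD; [|apply: ext_homogN]; apply: ext_homog_gen.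
have hB : emx_homog 1 B by move=> a b; apply: ext_homogD; apply: ext_homog_gen.
have skewA a b : A b a = - A a b by rewrite /A /amx opprB.
have symB a b : B b a = B a b by rewrite /B /bmx addrC.
have eT := emx_tr_pow_skew_symN k hA hB skewA symB.
apply/ffunP => S; move/ffunP/(_ S)/eqP: eT.
by rewrite !ffunE -subr_eq0 opprK -mulr2n mulrn_eq0 => /eqP.
Qed.
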